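(* For any integers $m,n\geq 3$, we have $M_{\mathcal{F}_{c}}(G_{m,n})\leq 16$. Moreover, $M_{\mathcal{F}_{c}}(G_{3,3})=16$.
   Context: For integers $m,n\geq 3$, the $m\times n$ grid $G_{m,n}$ is the graph with vertex set $[m]\times[n]$ in which $(u,v)$ and $(i,j)$ are adjacent if and only if either $u=i$ and $v\equiv j\pm 1 \pmod n$, or $v=j$ and $u\equiv i\pm1 \pmod m$. For two graphs on the same vertex set, their symmetric difference is the graph on that vertex set whose edges are those belonging to exactly one of the two graphs. $M_{\mathcal{F}_{c}}(G_{m,n})$ denotes the maximum possible size of a family $\mathcal{G}$ of spanning subgraphs of $G_{m,n}$ such that the symmetric difference of any two distinct members of $\mathcal{G}$ is connected. *)

From mathcomp Require Import all_boot.
Set Implicit Arguments. Unset Strict Implicit. Unset Printing Implicit Defensive.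

Definition gvert (m n : nat) : finType := ('I_m * 'I_n)%type.

Definition grid_adj (m n : nat) (u v : gvert m n) : bool :=
  ((u.1 == v.1) && ((nat_of_ord v.2 == (u.2 + 1) %% n) || (nat_of_ord u.2 == (v.2 + 1) %% n)))
  || ((u.2 == v.2) && ((nat_of_ord v.1 == (u.1 + 1) %% m) || (nat_of_ord u.1 == (v.1 + 1) %% m))).

Definition grid_edges (m n : nat) : {set {set gvert m n}} :=
  [set e : {set gvert m n} | [exists u, exists v, grid_adj u v && (e == [set u; v])]].

(* A spanning subgraph of G_{m,n} is given by its edge set, a subset of the
   edges of G_{m,n} (vertex set is always all of [m] x [n]). *)
Definition spanning_sub (m n : nat) (H : {set {set gvert m n}}) : bool :=
  H \subset grid_edges m n.

Definition symdiff (T : finType) (H1 H2 : {set {set T}}) : {set {set T}} :=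
  (H1 :\: H2) :|: (H2 :\: H1).

Definition connected_graph (T : finType) (S : {set {set T}}) : Prop :=
  forall u v : T, connect (fun x y => [set x; y] \in S) u v.

Definition conn_family (m n : nat) (F : {set {set {set gvert m n}}}) : Prop :=
  (forall H, H \in F -> spanning_sub H) /\
  (forall H1 H2, H1 \in F -> H2 \in F -> H1 != H2 -> connected_graph (symdiff H1 H2)).

Definition is_MFc (m n k : nat) : Prop :=
  (exists F : {set {set {set gvert m n}}}, conn_family F /\ #|F| = k) /\
  (forall F : {set {set {set gvert m n}}}, conn_family F -> #|F| <= k).

From mathcomp Require Import all_boot zmodp.
Set Implicit Arguments. Unset Strict Implicit. Unset Printing Implicit Defensive.

(* Upper bound: if H1 != H2 lie in an admissible family, their symmetric
   difference is connected, hence has an edge at any fixed vertex v; so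
   H |-> H :&: star v is injective on the family, and every vertex of G_{m,n}
   lies on at most 4 edges.  Lower bound: label the 18 edges of G_{3,3} by
   vectors of F_2^4 and, for s in F_2^4, let H_s be the set of edges whose label
   has odd inner product with s.  Then H_s and H_t differ exactly on H_{s+t},
   and a finite computation shows that these differences are connected. *)

Section EdgeSets.
Variable T : finType.
Implicit Types (x y : T) (r : rel T) (H S : {set {set T}}).

Definition edge_set r : {set {set T}} :=
  [set e | [exists x, exists y, r x y && (e == [set x; y])]].

Definition symdiff_rel r1 r2 : rel T := fun x y => r1 x y != r2 x y.

Definition star S x : {set {set T}} := [set e in S | x \in e].

Lemma set2_eqP x y u v :
  [set x; y] = [set u; v] -> (x = u /\ y = v) \/ (x = v /\ y = u).
Proof.
move=> Exy.
have /set2P xuv : x \in [set u; v] by rewrite -Exy set21.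
have /set2P yuv : y \in [set u; v] by rewrite -Exy set22.
have /set2P uxy : u \in [set x; y] by rewrite Exy set21.
have /set2P vxy : v \in [set x; y] by rewrite Exy set22.
by case: xuv yuv uxy vxy => -> [] -> [] ? [] ?; subst; tauto.
Qed.

Lemma edge_setP r e : reflect (exists x y, r x y /\ e = [set x; y]) (e \in edge_set r).
Proof.
rewrite inE; apply: (iffP existsP) => [[x /existsP[y /andP[rxy /eqP->]]] | [x [y [rxy ->]]]].
  by exists x, y.
by exists x; apply/existsP; exists y; rewrite rxy eqxx.
Qed.

Lemma mem_edge_set r x y : symmetric r -> ([set x; y] \in edge_set r) = r x y.
Proof.
move=> r_sym; apply/edge_setP/idP => [[u [v [ruv /set2_eqP[[-> ->] | [-> ->]]]]] | rxy].
- exact: ruv.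
- by rewrite r_sym.
- by exists x, y.
Qed.

Lemma edge_setS r1 r2 : subrel r1 r2 -> edge_set r1 \subset edge_set r2.
Proof.
move=> r12; apply/subsetP => e /edge_setP[x [y [rxy ->]]].
by apply/edge_setP; exists x, y; split; first exact: r12.
Qed.

Lemma symdiff_rel_sym r1 r2 :
  symmetric r1 -> symmetric r2 -> symmetric (symdiff_rel r1 r2).
Proof. by move=> r1_sym r2_sym x y; rewrite /symdiff_rel r1_sym r2_sym. Qed.

Lemma symdiff_edge_set r1 r2 : symmetric r1 -> symmetric r2 ->
  symdiff (edge_set r1) (edge_set r2) = edge_set (symdiff_rel r1 r2).
Proof.
move=> r1_sym r2_sym; have sym12 := symdiff_rel_sym r1_sym r2_sym.
apply/setP => e.
have [/existsP[x /existsP[y /eqP->]] | not_pair] :=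
  boolP [exists x, exists y, e == [set x; y]].
  rewrite in_setU !in_setD !mem_edge_set // /symdiff_rel.
  by case: (r1 x y); case: (r2 x y).
have notin r : e \notin edge_set r.
  apply: contra not_pair => /edge_setP[x [y [_ ->]]].
  by apply/existsP; exists x; apply/existsP; exists y.
by rewrite in_setU !in_setD !(negbTE (notin _)).
Qed.

Lemma connected_edge_set r : symmetric r ->
  (forall x y, connect r x y) -> connected_graph (edge_set r).
Proof.
move=> r_sym r_conn x y; rewrite (eq_connect (e' := r)) //.
by move=> u v; rewrite mem_edge_set.
Qed.

Lemma connected_graph_edge S x y :
  connected_graph S -> x != y -> exists z, [set x; z] \in S.
Proof.
move=> S_conn; case/connectP: (S_conn x y) => [[|z p]] /=; first by move=> _ ->; rewrite eqxx.
by case/andP => xz _ _ _; exists z.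
Qed.

Lemma symdiffvv H : symdiff H H = set0.
Proof. by rewrite /symdiff setDv setU0. Qed.

Lemma symdiffIr H1 H2 S : symdiff (H1 :&: S) (H2 :&: S) = symdiff H1 H2 :&: S.
Proof.
by apply/setP => e; rewrite !inE; case: (e \in H1); case: (e \in H2); case: (e \in S).
Qed.

Lemma exists_neq x : 1 < #|T| -> exists y, x != y.
Proof.
case/card_gt1P => [u [v [_ _ uv]]].
by case: (eqVneq x u) => [-> | xu]; [exists v | exists u].
Qed.

Lemma card_family_le_exp_star (E : {set {set T}}) (F : {set {set {set T}}}) x :
  1 < #|T| ->
  (forall H, H \in F -> H \subset E) ->
  (forall H1 H2, H1 \in F -> H2 \in F -> H1 != H2 -> connected_graph (symdiff H1 H2)) ->
  #|F| <= 2 ^ #|star E x|.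
Proof.
move=> /(exists_neq x)[y xy] F_sub F_conn.
have restr_inj : {in F &, injective (fun H => H :&: star E x)}.
  move=> H1 H2 H1F H2F eq12; apply/eqP/contraT => H12.
  have [z xz] := connected_graph_edge (F_conn _ _ H1F H2F H12) xy.
  have xz_E : [set x; z] \in E.
    by move: xz; rewrite in_setU !in_setD => /orP[]/andP[_]; apply/subsetP/F_sub.
  have : [set x; z] \in symdiff H1 H2 :&: star E x by rewrite inE xz inE xz_E set21.
  by rewrite -symdiffIr eq12 symdiffvv inE.
rewrite -(card_in_imset restr_inj) -card_powerset.
apply/subset_leq_card/subsetP => _ /imsetP[H _ ->].
by rewrite powersetE subsetIr.
Qed.

End EdgeSets.

Section EdgeSetFamily.
Variables (T W : finType) (adj : rel T) (r : W -> rel T).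
Hypothesis T_nontrivial : 1 < #|T|.
Hypothesis r_sym : forall s, symmetric (r s).
Hypothesis r_adj : forall s, subrel (r s) adj.
Hypothesis r_conn :
  forall s t, s != t -> forall x y, connect (symdiff_rel (r s) (r t)) x y.

Definition edge_set_family : {set {set {set T}}} := [set edge_set (r s) | s : W].

Lemma edge_set_family_sub H : H \in edge_set_family -> H \subset edge_set adj.
Proof. by case/imsetP => s _ ->; apply: edge_setS. Qed.

Lemma connected_symdiff_edge_set s t :
  s != t -> connected_graph (symdiff (edge_set (r s)) (edge_set (r t))).
Proof.
move=> st; rewrite symdiff_edge_set //.
exact/connected_edge_set/r_conn/st/symdiff_rel_sym.
Qed.

Lemma edge_set_family_connected H1 H2 :
  H1 \in edge_set_family -> H2 \in edge_set_family -> H1 != H2 ->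
  connected_graph (symdiff H1 H2).
Proof.
case/imsetP => s _ -> /imsetP[t _ ->] H12; apply: connected_symdiff_edge_set.
by apply: contraNneq H12 => ->.
Qed.

Lemma card_edge_set_family : #|edge_set_family| = #|W|.
Proof.
rewrite card_imset // => s t Est; apply/eqP/contraT => st.
have [x _] := card_gt0P (ltnW T_nontrivial); have [y xy] := exists_neq x T_nontrivial.
have [z] := connected_graph_edge (connected_symdiff_edge_set st) xy.
by rewrite Est symdiffvv inE.
Qed.

End EdgeSetFamily.

Section Grid.
Variables m n : nat.
Implicit Types v w : gvert m n.

Lemma grid_edgesE : grid_edges m n = edge_set (@grid_adj m n).
Proof. by []. Qed.

Lemma card_gvert : #|gvert m n| = m * n.
Proof. by rewrite card_prod !card_ord. Qed.

Lemma grid_adj_sym : symmetric (@grid_adj m n).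
Proof.
move=> v w; rewrite /grid_adj (eq_sym v.1) (eq_sym v.2).
by rewrite (orbC (_ == (v.2 + 1) %% n)) (orbC (_ == (v.1 + 1) %% m)).
Qed.

Definition grid_neighbours v : seq (gvert m n) :=
  [:: (v.1, ordS v.2); (v.1, ord_pred v.2); (ordS v.1, v.2); (ord_pred v.1, v.2)].

Lemma grid_adj_neighbour v w : grid_adj v w -> w \in grid_neighbours v.
Proof.
case: v w => [a b] [c d]; rewrite /grid_adj !inE /= !xpair_eqE !addn1.
have ordSE k (i j : 'I_k) : (nat_of_ord j == i.+1 %% k) = (j == ordS i) by [].
have ordS_predE k (i j : 'I_k) : (i == ordS j) = (j == ord_pred i).
  by rewrite eq_sym (can2_eq (@ordSK k) (@ord_predK k)).
rewrite !ordSE (ordS_predE _ b) (ordS_predE _ a).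
by case/orP=> /andP[/eqP-> /orP[]/eqP->]; rewrite !eqxx ?orbT.
Qed.

Lemma card_grid_star v : #|star (grid_edges m n) v| <= 4.
Proof.
have star_sub : star (grid_edges m n) v \subset [set [set v; w] | w in grid_neighbours v].
  apply/subsetP => e; rewrite inE grid_edgesE => /andP[/edge_setP[x [y [xy ->]]]].
  case/set2P => ->; apply/imsetP.
    by exists y; first exact: grid_adj_neighbour.
  by exists x; rewrite 1?setUC // grid_adj_neighbour // grid_adj_sym.
apply: leq_trans (subset_leq_card star_sub) _.
exact: leq_trans (leq_imset_card _ _) (card_size _).
Qed.

Theorem grid_family_card_le (F : {set {set {set gvert m n}}}) :
  1 < m * n -> conn_family F -> #|F| <= 16.
Proof.
rewrite -card_gvert => mn [F_sub F_conn].
have [v _] := card_gt0P (ltnW mn).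
apply: leq_trans (card_family_le_exp_star v mn F_sub F_conn) _.
exact: leq_pexp2l (card_grid_star v).
Qed.

End Grid.

Section BreadthFirstSearch.
Variables (T : finType) (r : rel T) (N : nat) (vertex : nat -> T).

Definition adj_table : seq (seq bool) :=
  [seq [seq r (vertex i) (vertex j) | j <- iota 0 N] | i <- iota 0 N].

Definition bfs_step (tab : seq (seq bool)) (seen : seq nat) : seq nat :=
  seen ++ [seq j <- iota 0 N |
           (j \notin seen) && has (fun i => nth false (nth [::] tab i) j) seen].

(* The [let] makes [vm_compute] evaluate [r] only [N * N] times. *)
Definition bfs (i0 : nat) : seq nat :=
  let tab := adj_table in iter N (bfs_step tab) [:: i0].

Lemma adj_tableP i j : nth false (nth [::] adj_table i) j -> r (vertex i) (vertex j).
Proof.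
rewrite /adj_table; have [iN | Ni] := ltnP i N; last first.
  by rewrite (@nth_default _ [::]) ?size_map ?size_iota // nth_nil.
rewrite (nth_map 0) ?size_iota // nth_iota //.
have [jN | Nj] := ltnP j N; last by rewrite nth_default ?size_map ?size_iota.
by rewrite (nth_map 0) ?size_iota // nth_iota.
Qed.

Lemma bfs_connect i0 : {in bfs i0, forall j, connect r (vertex i0) (vertex j)}.
Proof.
suff iter_conn k : {in iter k (bfs_step adj_table) [:: i0],
    forall j, connect r (vertex i0) (vertex j)} by exact: iter_conn.
elim: k => [|k IHk] j /=; first by rewrite inE => /eqP->.
rewrite mem_cat => /orP[/IHk // |].
rewrite mem_filter => /andP[/andP[_ /hasP[i ik /adj_tableP rij]] _].
exact: connect_trans (IHk i ik) (connect1 rij).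
Qed.

Lemma connect_of_bfs i0 : symmetric r -> (forall x, x \in map vertex (iota 0 N)) ->
  all (mem (bfs i0)) (iota 0 N) -> forall x y, connect r x y.
Proof.
move=> r_sym vertex_onto /allP reach x y.
have root_conn z : connect r (vertex i0) z.
  by have /mapP[j jN ->] := vertex_onto z; apply/bfs_connect/reach.
by apply: connect_trans (root_conn y); rewrite (sym_connect_sym r_sym).
Qed.

End BreadthFirstSearch.

(* Unlike [ord_enum n], these enumerations evaluate under [vm_compute]. *)
Definition ord_list n : seq 'I_n.+1 := map inZp (iota 0 n.+1).

Lemma mem_ord_list n (i : 'I_n.+1) : i \in ord_list n.
Proof. by rewrite -(valZpK i); apply: map_f; rewrite mem_iota ltn_ord. Qed.

Definition grid_vertex m n (i : nat) : gvert m.+1 n.+1 := (inZp (i %/ n.+1), inZp i).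

Lemma grid_vertex_onto m n (v : gvert m.+1 n.+1) :
  v \in map (grid_vertex m n) (iota 0 (m.+1 * n.+1)).
Proof.
case: v => a b; apply/mapP; exists (a * n.+1 + b).
  rewrite mem_iota add0n; apply: (@leq_trans (a.+1 * n.+1)).
    by rewrite mulSn [_ + a * _]addnC ltn_add2l.
  by rewrite leq_mul2r ltn_ord orbT.
rewrite /grid_vertex; congr pair; apply: val_inj => /=.
  by rewrite divnMDl // divn_small // addn0 modn_small.
by rewrite modnMDl modn_small.
Qed.

(* Vectors of F_2^4 are written as 4-bit integers.  The edge from (i, j) to
   (i, j + 1) (resp. (i + 1, j)) gets entry 3 i + j of [horizontal]
   (resp. [vertical]). *)
Definition grid33_label (x y : gvert 3 3) : nat :=
  let horizontal := [:: 7; 13; 1; 9; 2; 15; 6; 2; 4] in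
  let vertical := [:: 10; 8; 6; 11; 13; 5; 3; 12; 14] in
  let index (z : gvert 3 3) := 3 * z.1 + z.2 in
  if x.1 == y.1 then
    nth 0 horizontal (index (if nat_of_ord y.2 == (x.2 + 1) %% 3 then x else y))
  else nth 0 vertical (index (if nat_of_ord y.1 == (x.1 + 1) %% 3 then x else y)).

Definition bits_dot (s l : nat) : bool :=
  odd (count (fun i => odd (s %/ 2 ^ i) && odd (l %/ 2 ^ i)) (iota 0 4)).

Definition grid33_code (s : 'I_16) : rel (gvert 3 3) :=
  fun x y => grid_adj x y && bits_dot s (grid33_label x y).

Lemma grid33_label_sym x y : grid_adj x y -> grid33_label x y = grid33_label y x.
Proof.
have /mapP[i i9 ->] := grid_vertex_onto x; have /mapP[j j9 ->] := grid_vertex_onto y.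
have label_sym : all (fun i => all (fun j =>
    let x := grid_vertex 2 2 i in let y := grid_vertex 2 2 j in
    grid_adj x y ==> (grid33_label x y == grid33_label y x)) (iota 0 9)) (iota 0 9).
  by vm_compute.
by have /= /implyP adj_eq := allP (allP label_sym i i9) j j9; move/adj_eq/eqP.
Qed.

Lemma grid33_code_sym s : symmetric (grid33_code s).
Proof.
move=> x y; rewrite /grid33_code grid_adj_sym.
by case yx: (grid_adj y x); rewrite //= grid33_label_sym // grid_adj_sym.
Qed.

Lemma grid33_code_conn s t : s != t ->
  forall x y, connect (symdiff_rel (grid33_code s) (grid33_code t)) x y.
Proof.
move=> st; apply: (@connect_of_bfs _ _ 9 (grid_vertex 2 2) 0).
- exact: symdiff_rel_sym (grid33_code_sym s) (grid33_code_sym t).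
- exact: grid_vertex_onto.
have /allP/(_ s (mem_ord_list s))/allP/(_ t (mem_ord_list t)) : all (fun s => all (fun t =>
    (s == t) || all (mem (bfs (symdiff_rel (grid33_code s) (grid33_code t))
                                 9 (grid_vertex 2 2) 0)) (iota 0 9))
  (ord_list 15)) (ord_list 15) by vm_compute.
by rewrite (negbTE st).
Qed.

Theorem proposition1p7 :
  (forall (m n : nat), 3 <= m -> 3 <= n ->
     forall F : {set {set {set gvert m n}}}, conn_family F -> #|F| <= 16)
  /\ is_MFc 3 3 16.
Proof.
have grid_bound m n (F : {set {set {set gvert m n}}}) :
    3 <= m -> 3 <= n -> conn_family F -> #|F| <= 16.
  by move=> m3 n3; apply: grid_family_card_le; apply: leq_trans (leq_mul m3 n3).
split=> [m n m3 n3 F | ]; first exact: grid_bound.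
split=> [ | F]; last exact: grid_bound.
have code_adj s : subrel (grid33_code s) (@grid_adj 3 3) by move=> x y /andP[].
have nontrivial : 1 < #|gvert 3 3| by rewrite card_gvert.
exists (edge_set_family grid33_code); split; last first.
  by rewrite (card_edge_set_family nontrivial grid33_code_sym grid33_code_conn) card_ord.
split=> [H HF | ]; first exact (edge_set_family_sub code_adj HF).
exact (edge_set_family_connected grid33_code_sym grid33_code_conn).
Qed.
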